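(* Let $n>0$ and $J\subseteq S$. The restriction of the weak order $\leq_S$ to the set $\mathfrak{S}_n^J(231)$ is a lattice, denoted $\mathcal{T}_n^J$. Although $\mathcal{T}_n^J$ is in general not a sublattice of $\mathrm{Weak}(\mathfrak{S}_n^J)$, it is a lattice quotient of $\mathrm{Weak}(\mathfrak{S}_n^J)$, i.e. there is a lattice congruence $\Theta$ on $\mathrm{Weak}(\mathfrak{S}_n^J)$ such that the quotient lattice $\mathrm{Weak}(\mathfrak{S}_n^J)/\Theta$ is isomorphic to $\mathcal{T}_n^J$.
   Context: Let $\mathfrak{S}_n$ be the symmetric group on $[n]=\{1,\dots,n\}$, $s_i=(i,i+1)$ for $i\in[n-1]$, and $S=\{s_1,\dots,s_{n-1}\}$. Write permutations in one-line notation $w=w_1w_2\cdots w_n$ with $w_i=w(i)$. The inversion set is $\mathrm{inv}(w)=\{(i,j):1\le i<j\le n,\ w_i>w_j\}$ and the (left) weak order is $u\le_S v$ iff $\mathrm{inv}(u)\subseteq\mathrm{inv}(v)$. For $J\subseteq S$, the parabolic quotient is $\mathfrak{S}_n^J=\{w\in\mathfrak{S}_n : w<_S ws\text{ for all }s\in J\}$ (concretely: $w_i<w_{i+1}$ whenever $s_i\in J$); $\mathrm{Weak}(\mathfrak{S}_n^J)$ is $\mathfrak{S}_n^J$ with the restricted order, which is a lattice (it is the weak order interval $[e,w_\circ^J]$). Writing $J=S\setminus\{s_{j_1},\dots,s_{j_r}\}$ with $j_1<\dots<j_r$, the $J$-regions are the blocks $\{1,\dots,j_1\},\{j_1+1,\dots,j_2\},\dots,\{j_r+1,\dots,n\}$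 of $[n]$. An element $w\in\mathfrak{S}_n^J$ contains a $(J,231)$-pattern if there are indices $i<j<k$, lying in three pairwise different $J$-regions, with $w_k<w_i<w_j$ and $w_i=w_k+1$; otherwise $w$ is $(J,231)$-avoiding, and $\mathfrak{S}_n^J(231)$ denotes the set of $(J,231)$-avoiding elements of $\mathfrak{S}_n^J$. A lattice congruence on a lattice $L$ is an equivalence relation $\Theta$ such that $x\,\Theta\, y$ implies $(x\wedge z)\,\Theta\,(y\wedge z)$ and $(x\vee z)\,\Theta\,(y\vee z)$ for all $z$; the quotient $L/\Theta$ carries the induced lattice operations. *)

(* Permutations of [n] are encoded as 'S_n = {perm 'I_n},
   using 0-based positions/values (position i <-> i+1 in the paper).
   The simple transposition s_{k+1} (paper) is indexed by k : 'I_n.-1 and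
   swaps positions k and k+1 (0-based). *)
From mathcomp Require Import all_boot all_fingroup.
Set Implicit Arguments. Unset Strict Implicit. Unset Printing Implicit Defensive.

Section Defs.
Variable n : nat.

Definition weak_le (u v : 'S_n) : Prop :=
  forall i j : 'I_n, i < j -> u j < u i -> v j < v i.

Definition in_quotient (J : {set 'I_n.-1}) (w : 'S_n) : Prop :=
  forall (k : 'I_n.-1) (i j : 'I_n),
    k \in J -> val i = val k -> val j = (val k).+1 -> w i < w j.

Definition same_region (J : {set 'I_n.-1}) (a b : 'I_n) : Prop :=
  forall k : 'I_n.-1, a <= k -> k < b -> k \in J.

Definition has_J231 (J : {set 'I_n.-1}) (w : 'S_n) : Prop :=
  exists i j k : 'I_n,
    [/\ (i < j) && (j < k),
        [/\ ~ same_region J i j, ~ same_region J j k & ~ same_region J i k],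
        (w k < w i) && (w i < w j) & val (w i) = (val (w k)).+1].

Definition avoid_J231 (J : {set 'I_n.-1}) (w : 'S_n) : Prop :=
  in_quotient J w /\ ~ has_J231 J w.

Definition is_meet (P : 'S_n -> Prop) (x y m : 'S_n) : Prop :=
  [/\ P m, weak_le m x, weak_le m y &
      forall z, P z -> weak_le z x -> weak_le z y -> weak_le z m].

Definition is_join (P : 'S_n -> Prop) (x y m : 'S_n) : Prop :=
  [/\ P m, weak_le x m, weak_le y m &
      forall z, P z -> weak_le x z -> weak_le y z -> weak_le m z].

Definition is_lattice (P : 'S_n -> Prop) : Prop :=
  forall x y, P x -> P y ->
    (exists m, is_meet P x y m) /\ (exists j, is_join P x y j).

Definition lattice_congruence (P : 'S_n -> Prop) (Th : 'S_n -> 'S_n -> Prop)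
  : Prop :=
  [/\ (forall x, P x -> Th x x),
      (forall x y, P x -> P y -> Th x y -> Th y x),
      (forall x y z, P x -> P y -> P z -> Th x y -> Th y z -> Th x z),
      (forall x y z m m', P x -> P y -> P z -> Th x y ->
          is_meet P x z m -> is_meet P y z m' -> Th m m') &
      (forall x y z m m', P x -> P y -> P z -> Th x y ->
          is_join P x z m -> is_join P y z m' -> Th m m')].

(* order of the quotient lattice P/Th: [x] <= [y] iff [x /\ y] = [x] *)
Definition quotient_le (P : 'S_n -> Prop) (Th : 'S_n -> 'S_n -> Prop)
  (x y : 'S_n) : Prop :=
  exists m, is_meet P x y m /\ Th m x.

(* (P/Th) is isomorphic (as a poset, hence as a lattice) to (Q, weak_le):
   phi induces a bijection from the Th-classes of P onto Q that is an
   order isomorphism. *)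
Definition quotient_iso (P : 'S_n -> Prop) (Th : 'S_n -> 'S_n -> Prop)
  (Q : 'S_n -> Prop) : Prop :=
  exists phi : 'S_n -> 'S_n,
    [/\ (forall x, P x -> Q (phi x)),
        (forall t, Q t -> exists x, P x /\ phi x = t),
        (forall x y, P x -> P y -> (Th x y <-> phi x = phi y)) &
        (forall x y, P x -> P y ->
           (quotient_le P Th x y <-> weak_le (phi x) (phi y)))].

End Defs.

(* Call an inversion (i, k) of w a key inversion if every position j with
   i < j < k lying in a J-region different from those of i and k has w_j < w_i.
   Inversion sets are exactly the transitive and cotransitive sets of pairs, so
   the transitive closure of the key inversions of w is the inversion set of a
   permutation pi_down w <= w.  It is (J,231)-avoiding, and it is the largest
   (J,231)-avoiding permutation below w: if a avoids (J,231) and (i, k) is an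
   inversion of a with a separated j such that a_i < a_j, then some l between i
   and k has a_k < a_l < a_i, so the inversions of a are chains of key inversions
   of w.  Moreover every key inversion of x \/ z is a chain of key inversions of
   x and z, whence pi_down (x \/ z) <= pi_down x \/ z.
   For any such projection of a lattice P onto a subset A, A is a lattice, the
   fibres of the projection form a lattice congruence of P, and the projection
   identifies the quotient with A.  Here P = S_n^J, which is a lower interval of
   the weak order closed under joins. *)

From mathcomp Require Import all_boot all_fingroup zify.
Set Implicit Arguments. Unset Strict Implicit. Unset Printing Implicit Defensive.

Lemma connect_eqVsub (T : finType) (e Q : rel T) : transitive Q -> subrel e Q ->
  forall x y, connect e x y -> x = y \/ Q x y.
Proof.
move=> trQ eQ x y /connectP [p]; elim: p x => [|z p IHp] x /=; first by left.
case/andP=> /eQ Qxz /IHp {}IHp /IHp [<-|Qzy]; right=> //.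
exact: trQ Qxz Qzy.
Qed.

Section OrientedRelations.
Variable n : nat.
Implicit Types (R Q : rel 'I_n) (i j k l : 'I_n).

Definition oriented R := forall i k, R i k -> i < k.

Definition cotransitive R :=
  forall i j k, i < j -> j < k -> R i k -> R i j || R j k.

Definition tclosure R : rel 'I_n := fun i k => (i < k) && connect R i k.

Lemma connect_oriented R i k : oriented R -> connect R i k -> i <= k.
Proof.
have leq_tr : transitive (fun a b : 'I_n => a <= b) by move=> ? ? ?; apply: leq_trans.
by move=> oR /(connect_eqVsub leq_tr) [x y /oR /ltnW|->|].
Qed.

Lemma tclosure_oriented R : oriented (tclosure R).
Proof. by move=> i k /andP []. Qed.

Lemma tclosure_trans R : transitive (tclosure R).
Proof.
move=> j i k /andP [ij cij] /andP [jk cjk].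
by rewrite /tclosure (ltn_trans ij jk) (connect_trans cij cjk).
Qed.

Lemma sub_tclosure R : oriented R -> subrel R (tclosure R).
Proof. by move=> oR i k Rik; rewrite /tclosure oR // connect1. Qed.

Lemma tclosure_min R Q : transitive Q -> subrel R Q -> subrel (tclosure R) Q.
Proof.
move=> trQ RQ i k /andP [ik /(connect_eqVsub trQ RQ) [eik|//]].
by move: ik; rewrite eik ltnn.
Qed.

Lemma tclosure_split R i k : oriented R -> tclosure R i k ->
  R i k \/ exists2 l, tclosure R i l & tclosure R l k.
Proof.
move=> oR /andP [ik /connectP [[|l p]]] /=.
  by move=> _ eik; move: ik; rewrite eik ltnn.
move=> /andP [Ril pth] ek.
have clk : connect R l k by apply/connectP; exists p.
have [lk|kl|/val_inj elk] := ltngtP l k.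
- by right; exists l; [exact: sub_tclosure | rewrite /tclosure lk].
- by move: (connect_oriented oR clk); rewrite leqNgt kl.
- by left; rewrite -elk.
Qed.

Lemma tclosure_cotrans R : oriented R -> cotransitive R -> cotransitive (tclosure R).
Proof.
move=> oR coR.
pose Q : rel 'I_n := fun a c => tclosure R a c &&
  [forall b : 'I_n, (a < b < c) ==> tclosure R a b || tclosure R b c].
have trQ : transitive Q.
  move=> b a c /andP [Rab /forallP Qab] /andP [Rbc /forallP Qbc].
  rewrite /Q (tclosure_trans Rab Rbc); apply/forallP => b'.
  apply/implyP => /andP [ab' b'c].
  have [b'b|bb'|/val_inj ->] := ltngtP b' b; last by rewrite Rab.
  - move: (Qab b'); rewrite ab' b'b /= => /orP [->//|Rb'b].
    by rewrite (tclosure_trans Rb'b Rbc) orbT.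
  - move: (Qbc b'); rewrite bb' b'c /= => /orP [Rbb'|->]; last by rewrite orbT.
    by rewrite (tclosure_trans Rab Rbb').
have RQ : subrel R Q.
  move=> a c Rac; rewrite /Q sub_tclosure //=; apply/forallP => b.
  apply/implyP => /andP [ab bc].
  by case/orP: (coR _ _ _ ab bc Rac) => /(sub_tclosure oR) ->; rewrite ?orbT.
move=> i j k ij jk /(tclosure_min trQ RQ) /andP [_ /forallP /(_ j) /implyP].
by apply; rewrite ij jk.
Qed.

Lemma orientedU R Q : oriented R -> oriented Q -> oriented (relU R Q).
Proof. by move=> oR oQ i k /orP [/oR|/oQ]. Qed.

Lemma cotransitiveU R Q :
  cotransitive R -> cotransitive Q -> cotransitive (relU R Q).
Proof.
move=> coR coQ i j k ij jk /orP [/(coR _ _ _ ij jk)|/(coQ _ _ _ ij jk)] /orP [] /= ->;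
  by rewrite ?orbT.
Qed.

Lemma tclosure_split_ind K R : oriented K ->
  (forall i k, K i k -> R i k \/ exists2 l, K i l & K l k) ->
  subrel K (tclosure R).
Proof.
move=> oK split_K i k; move: {2}(k - i) (leqnn (k - i)) => d.
elim: d i k => [|d IHd] i k span /[dup] /oK ik; first by lia.
case/split_K => [Rik|[l Kil Klk]]; first by rewrite /tclosure ik connect1.
have [il lk] := (oK _ _ Kil, oK _ _ Klk).
by apply: (@tclosure_trans _ l); apply: IHd => //; lia.
Qed.

End OrientedRelations.

Section Inversions.
Variable n : nat.
Implicit Types (u v w : 'S_n) (i j k : 'I_n).

Definition inv_rel w : rel 'I_n := fun i k => (i < k) && (w k < w i).

Lemma weak_leP u v : weak_le u v <-> subrel (inv_rel u) (inv_rel v).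
Proof.
split=> [uv i k /andP [ik /(uv _ _ ik) vki]|uv i k ik uki].
  by rewrite /inv_rel ik.
by case/andP: (uv i k (introT andP (conj ik uki))).
Qed.

Lemma weak_refl u : weak_le u u.
Proof. by []. Qed.

Lemma weak_trans u v w : weak_le u v -> weak_le v w -> weak_le u w.
Proof. by move=> uv vw i k ik /(uv _ _ ik) /(vw _ _ ik). Qed.

Lemma inv_rel_oriented w : oriented (inv_rel w).
Proof. by move=> i k /andP []. Qed.

Lemma inv_rel_trans w : transitive (inv_rel w).
Proof.
move=> j i k /andP [ij wji] /andP [jk wkj].
by rewrite /inv_rel (ltn_trans ij jk) (ltn_trans wkj wji).
Qed.

Lemma perm_ltNinv w i k : i < k -> (w i < w k) = ~~ inv_rel w i k.
Proof.
move=> ik; rewrite /inv_rel ik ltnNge leq_eqVlt (inj_eq val_inj) (inj_eq perm_inj).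
by rewrite eq_sym -val_eqE ltn_eqF.
Qed.

Lemma inv_rel_cotrans w : cotransitive (inv_rel w).
Proof.
move=> i j k ij jk /andP [ik wki]; rewrite /inv_rel ij jk /=.
by case: ltnP => // /(leq_trans wki) ->; rewrite orbT.
Qed.

Lemma card_ord_lt (m : 'I_n) : #|[pred v : 'I_n | v < m]| = m.
Proof.
have inj_widen : injective (widen_ord (ltnW (ltn_ord m))).
  by move=> x y /(congr1 val) /= /val_inj.
rewrite -[RHS]card_ord -(card_imset _ inj_widen).
apply: eq_card => v; rewrite inE; apply/idP/imsetP => [vm|[v' _ ->]].
  by exists (Ordinal vm) => //; apply: val_inj.
exact: (ltn_ord v').
Qed.

Lemma perm_val w i : val (w i) = #|[pred j | w j < w i]|.
Proof.
rewrite -[LHS]card_ord_lt -[RHS](card_imset _ (@perm_inj _ w)).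
apply: eq_card => v; rewrite inE; apply/idP/imsetP => [vw|[j + ->] //].
by exists ((w^-1)%g v); rewrite ?inE permKV.
Qed.

Lemma weak_antisym u v : weak_le u v -> weak_le v u -> u = v.
Proof.
move=> /weak_leP uv /weak_leP vu.
have inv_uv i k : inv_rel u i k = inv_rel v i k by apply/idP/idP => [/uv|/vu].
apply/permP => i; apply: val_inj; rewrite (perm_val u) (perm_val v).
apply: eq_card => j; rewrite !inE.
have [ji|ij|/val_inj ->] := ltngtP j i; last by rewrite !ltnn.
- by rewrite !perm_ltNinv // inv_uv.
- by have := inv_uv i j; rewrite /inv_rel ij.
Qed.

End Inversions.

Section PermOfInversions.
Variables (n : nat) (S : rel 'I_n).
Implicit Types (a b c i j k : 'I_n).

(* Position [j] gets a smaller value than [i] in the permutation with inversion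
   set [S]. *)
Definition value_lt j i := ((j < i) && ~~ S j i) || ((i < j) && S i j).

Lemma value_lt_irr i : value_lt i i = false.
Proof. by rewrite /value_lt ltnn. Qed.

Lemma value_lt_lt a b : a < b -> value_lt a b = ~~ S a b.
Proof. by move=> ab; rewrite /value_lt ab ltnNge (ltnW ab) orbF. Qed.

Lemma value_lt_gt a b : b < a -> value_lt a b = S b a.
Proof. by move=> ba; rewrite /value_lt ba ltnNge (ltnW ba). Qed.

Lemma value_lt_total i j : i != j -> value_lt i j || value_lt j i.
Proof.
move=> nij; have [ij|ji|/val_inj eij] := ltngtP i j; last by rewrite eij eqxx in nij.
  by rewrite value_lt_lt // value_lt_gt // orNb.
by rewrite value_lt_gt // value_lt_lt // orbN.
Qed.

Lemma card_value_lt i : #|[pred j | value_lt j i]| < n.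
Proof.
apply: (@leq_ltn_trans #|predC1 i|).
  apply/subset_leq_card/subsetP => j; rewrite !inE.
  by apply: contraTneq => ->; rewrite value_lt_irr.
by rewrite cardC1 card_ord ltn_predL (leq_ltn_trans _ (ltn_ord i)).
Qed.

Definition value_rank i : 'I_n := Ordinal (card_value_lt i).

(* The default [1] is never reached when [S] is oriented, transitive and
   cotransitive (perm_of_invE). *)
Definition perm_of_inv : 'S_n :=
  if injectiveP value_rank is ReflectT rank_inj then perm rank_inj else 1%g.

Hypotheses (oS : oriented S) (trS : transitive S) (coS : cotransitive S).

Lemma value_lt_trans a b c : value_lt a b -> value_lt b c -> value_lt a c.
Proof.
move=> vab vbc.
have [ab|ba|/val_inj eab] := ltngtP a b; last by rewrite eab value_lt_irr in vab.
- rewrite value_lt_lt // in vab.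
  have [bc|cb|/val_inj ebc] := ltngtP b c; last by rewrite ebc value_lt_irr in vbc.
    rewrite value_lt_lt // in vbc; rewrite value_lt_lt ?(ltn_trans ab bc) //.
    by apply/negP => /(coS ab bc); rewrite (negbTE vab) (negbTE vbc).
  rewrite value_lt_gt // in vbc.
  have [ac|ca|/val_inj eac] := ltngtP a c; last by rewrite eac vbc in vab.
    by rewrite value_lt_lt //; apply: contra vab => Sac; apply: trS Sac vbc.
  by rewrite value_lt_gt //; move: (coS ca ab vbc); rewrite (negbTE vab) orbF.
- rewrite value_lt_gt // in vab.
  have [bc|cb|/val_inj ebc] := ltngtP b c; last by rewrite ebc value_lt_irr in vbc.
    rewrite value_lt_lt // in vbc.
    have [ac|ca|/val_inj eac] := ltngtP a c; last by rewrite -eac vab in vbc.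
      by rewrite value_lt_lt //; apply: contra vbc; apply: trS vab.
    by rewrite value_lt_gt //; move: (coS bc ca vab); rewrite (negbTE vbc).
  rewrite value_lt_gt // in vbc; rewrite value_lt_gt ?(ltn_trans cb ba) //.
  exact: trS vbc vab.
Qed.

Lemma value_rank_mono j i : value_lt j i -> value_rank j < value_rank i.
Proof.
move=> vji; rewrite /= proper_card //; apply/properP; split.
  by apply/subsetP => k; rewrite !inE => /value_lt_trans; apply.
by exists j; rewrite !inE ?value_lt_irr.
Qed.

Lemma value_rank_inj : injective value_rank.
Proof.
move=> i j eij; apply/eqP/negPn/negP => /value_lt_total.
by case/orP => /value_rank_mono; rewrite eij ltnn.
Qed.

Lemma perm_of_invE i : perm_of_inv i = value_rank i.
Proof.
rewrite /perm_of_inv; case: injectiveP => [rank_inj|[]]; first by rewrite permE.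
exact: value_rank_inj.
Qed.

Lemma inv_perm_of_inv : inv_rel perm_of_inv =2 S.
Proof.
move=> i k; rewrite /inv_rel !perm_of_invE.
have [ik|ki] := ltnP i k; last by apply/esym/negP => /oS; rewrite ltnNge ki.
case Sik: (S i k); first by rewrite value_rank_mono ?value_lt_gt.
by rewrite ltnNge ltnW // value_rank_mono // value_lt_lt // Sik.
Qed.

End PermOfInversions.

Section WeakLattice.
Variable n : nat.
Implicit Types (p q u v w z : 'S_n) (i k : 'I_n).

Definition weak_join p q : 'S_n :=
  perm_of_inv (tclosure (relU (inv_rel p) (inv_rel q))).

Lemma inv_relU_oriented p q : oriented (relU (inv_rel p) (inv_rel q)).
Proof. by apply: orientedU; exact: inv_rel_oriented. Qed.

Lemma inv_weak_join p q :
  inv_rel (weak_join p q) =2 tclosure (relU (inv_rel p) (inv_rel q)).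
Proof.
apply: inv_perm_of_inv; [exact: tclosure_oriented | exact: tclosure_trans |].
apply: tclosure_cotrans; first exact: inv_relU_oriented.
by apply: cotransitiveU; exact: inv_rel_cotrans.
Qed.

Lemma weak_join_ubl p q : weak_le p (weak_join p q).
Proof.
apply/weak_leP => i k pik; rewrite inv_weak_join.
by apply: (sub_tclosure (@inv_relU_oriented p q)); rewrite /= pik.
Qed.

Lemma weak_join_ubr p q : weak_le q (weak_join p q).
Proof.
apply/weak_leP => i k qik; rewrite inv_weak_join.
by apply: (sub_tclosure (@inv_relU_oriented p q)); rewrite /= qik orbT.
Qed.

Lemma weak_join_lub p q z : weak_le p z -> weak_le q z -> weak_le (weak_join p q) z.
Proof.
move=> /weak_leP pz /weak_leP qz; apply/weak_leP => i k; rewrite inv_weak_join.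
by apply: tclosure_min => [|a b /orP [/pz|/qz]]; first exact: inv_rel_trans.
Qed.

(* Left multiplication by the longest element w_0: it reverses the weak order, so
   meets are conjugates of joins. *)
Definition rev_values w : 'S_n := (w * perm (@rev_ord_inj n))%g.

Lemma rev_valuesK : involutive rev_values.
Proof. by move=> w; apply/permP => i; rewrite !permM !permE rev_ordK. Qed.

Lemma weak_le_rev u v : weak_le u v -> weak_le (rev_values v) (rev_values u).
Proof.
move=> /weak_leP uv i k ik; rewrite !permM !permE /= !ltn_sub2lE ?ltn_ord //.
by rewrite !ltnS !perm_ltNinv //; apply/contra/uv.
Qed.

Definition weak_meet p q : 'S_n :=
  rev_values (weak_join (rev_values p) (rev_values q)).

Lemma weak_meet_lbl p q : weak_le (weak_meet p q) p.
Proof. by rewrite -[X in weak_le _ X]rev_valuesK; apply/weak_le_rev/weak_join_ubl. Qed.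

Lemma weak_meet_lbr p q : weak_le (weak_meet p q) q.
Proof. by rewrite -[X in weak_le _ X]rev_valuesK; apply/weak_le_rev/weak_join_ubr. Qed.

Lemma weak_meet_glb p q z : weak_le z p -> weak_le z q -> weak_le z (weak_meet p q).
Proof.
move=> zp zq; rewrite -[z]rev_valuesK.
by apply/weak_le_rev/weak_join_lub; apply: weak_le_rev.
Qed.

End WeakLattice.

Section DownProjection.
Variables (n : nat) (P A : 'S_n -> Prop) (meet join : 'S_n -> 'S_n -> 'S_n).
Variable proj : 'S_n -> 'S_n.
Implicit Types (a x y z m : 'S_n).

Record down_projection : Prop := DownProjection {
  dp_meet : forall x y, P x -> P y -> is_meet P x y (meet x y);
  dp_join : forall x y, P x -> P y -> is_join P x y (join x y);
  dp_sub : forall a, A a -> P a;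
  dp_proj : forall x, P x -> A (proj x);
  dp_le : forall x, P x -> weak_le (proj x) x;
  dp_max : forall a x, A a -> P x -> weak_le a x -> weak_le a (proj x);
  dp_proj_join : forall x z, P x -> P z ->
    weak_le (proj (join x z)) (join (proj x) z)
}.

Hypothesis dp : down_projection.
Let meetP := dp_meet dp.
Let joinP := dp_join dp.
Let sub_AP := dp_sub dp.
Let proj_A := dp_proj dp.
Let proj_le := dp_le dp.
Let proj_max := dp_max dp.
Let proj_join := dp_proj_join dp.

Lemma proj_P x : P x -> P (proj x).
Proof. by move/proj_A/sub_AP. Qed.

Lemma proj_mono x y : P x -> P y -> weak_le x y -> weak_le (proj x) (proj y).
Proof.
by move=> Px Py xy; apply: proj_max (proj_A Px) Py (weak_trans (proj_le Px) xy).
Qed.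

Lemma proj_id a : A a -> proj a = a.
Proof.
move=> Aa; have Pa := sub_AP Aa.
exact: weak_antisym (proj_le Pa) (proj_max Aa Pa (@weak_refl n a)).
Qed.

Lemma is_join_eq x y m : is_join P x y m -> P x -> P y -> m = join x y.
Proof.
move=> [Pm xm ym lub_m] Px Py; have [Pj xj yj lub_j] := joinP Px Py.
exact: weak_antisym (lub_m _ Pj xj yj) (lub_j _ Pm xm ym).
Qed.

Lemma proj_lattice : is_lattice A.
Proof.
move=> x y Ax Ay; have [Px Py] := (sub_AP Ax, sub_AP Ay); split.
  have [Pm mx my glb_m] := meetP Px Py.
  exists (proj (meet x y)); split; first exact: proj_A.
  - exact: weak_trans (proj_le Pm) mx.
  - exact: weak_trans (proj_le Pm) my.
  - by move=> z Az zx zy; apply: proj_max Az Pm (glb_m _ (sub_AP Az) zx zy).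
have [Pj xj yj lub_j] := joinP Px Py.
exists (proj (join x y)); split; first exact: proj_A.
- exact: proj_max Ax Pj xj.
- exact: proj_max Ay Pj yj.
- by move=> z Az xz yz; apply: weak_trans (proj_le Pj) (lub_j _ (sub_AP Az) xz yz).
Qed.

Lemma proj_meet_le x y z m m' : P x -> P y -> proj x = proj y ->
  is_meet P x z m -> is_meet P y z m' -> weak_le (proj m) (proj m').
Proof.
move=> Px Py exy [Pm mx mz _] [Pm' _ _ glb_m']; apply: proj_max (proj_A Pm) Pm' _.
apply: glb_m'; first exact: proj_P.
  by apply: weak_trans (proj_mono Pm Px mx) _; rewrite exy; apply: proj_le Py.
exact: weak_trans (proj_le Pm) mz.
Qed.

Lemma proj_join_le x y z m m' : P x -> P y -> P z -> proj x = proj y ->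
  is_join P x z m -> is_join P y z m' -> weak_le (proj m) (proj m').
Proof.
move=> Px Py Pz exy /is_join_eq -> // [Pm' ym' zm' lub_m'].
have [Pj _ _ _] := joinP Px Pz; apply: (proj_max (proj_A Pj) Pm').
apply: weak_trans (proj_join Px Pz) _; rewrite exy.
have [_ _ _ lub_j] := joinP (proj_P Py) Pz.
exact: lub_j _ Pm' (weak_trans (proj_le Py) ym') zm'.
Qed.

Lemma proj_congruence : lattice_congruence P (fun x y => proj x = proj y).
Proof.
split=> [//|x y _ _ -> //|x y z _ _ _ -> -> //||].
- move=> x y z m m' Px Py _ exy Hm Hm'.
  apply: weak_antisym; first exact: proj_meet_le Px Py exy Hm Hm'.
  exact: proj_meet_le Py Px (esym exy) Hm' Hm.
- move=> x y z m m' Px Py Pz exy Hm Hm'.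
  apply: weak_antisym; first exact: proj_join_le Px Py Pz exy Hm Hm'.
  exact: proj_join_le Py Px Pz (esym exy) Hm' Hm.
Qed.

Lemma proj_quotient_iso : quotient_iso P (fun x y => proj x = proj y) A.
Proof.
exists proj; split=> [x /proj_A //|a Aa|//|x y Px Py].
  by exists a; split; [exact: sub_AP | exact: proj_id].
split=> [[m [[Pm _ my _] <-]]|xy]; first exact: proj_mono.
have [Pm mx my glb_m] := meetP Px Py.
exists (meet x y); split=> //; apply: weak_antisym; first exact: proj_mono.
apply: proj_max (proj_A Px) Pm (glb_m _ (proj_P Px) (proj_le Px) _).
exact: weak_trans xy (proj_le Py).
Qed.

End DownProjection.

Section ParabolicQuotient.
Variables (n : nat) (J : {set 'I_n.-1}).
Implicit Types (a p q r u v w x z : 'S_n) (i j k l : 'I_n).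

Lemma in_quotientE w : in_quotient J w <->
  forall (s : 'I_n.-1) i j, s \in J -> val i = s -> val j = s.+1 -> ~~ inv_rel w i j.
Proof.
split=> Qw s i j sJ si sj; have ij : i < j by rewrite sj si.
  by rewrite -perm_ltNinv //; apply: Qw s i j sJ si sj.
by rewrite perm_ltNinv //; apply: Qw s i j sJ si sj.
Qed.

Lemma in_quotient_le u w : in_quotient J w -> weak_le u w -> in_quotient J u.
Proof.
move=> /in_quotientE Qw /weak_leP uw; apply/in_quotientE => s i j sJ si sj.
by apply: contra (Qw s i j sJ si sj); apply: uw.
Qed.

Lemma in_quotient_join p q :
  in_quotient J p -> in_quotient J q -> in_quotient J (weak_join p q).
Proof.
move=> /in_quotientE Qp /in_quotientE Qq; apply/in_quotientE => s i j sJ si sj.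
rewrite inv_weak_join; apply/negP.
case/(tclosure_split (@inv_relU_oriented _ p q)) => [/orP []|[l il lj]].
- by apply/negP; apply: Qp s i j sJ si sj.
- by apply/negP; apply: Qq s i j sJ si sj.
- by move: (tclosure_oriented il) (tclosure_oriented lj); rewrite sj si; lia.
Qed.

Definition same_regionb i k :=
  [forall s : 'I_n.-1, (i <= s) ==> (s < k) ==> (s \in J)].

Lemma same_regionP i k : reflect (same_region J i k) (same_regionb i k).
Proof.
apply: (iffP forallP) => H s; first by move=> i_s sk; move: (H s); rewrite i_s sk.
by apply/implyP => i_s; apply/implyP; apply: H.
Qed.

Lemma same_regionb_sub i i' k k' :
  i <= i' -> k' <= k -> same_regionb i k -> same_regionb i' k'.
Proof.
move=> ii' k'k /forallP H; apply/forallP => s; apply/implyP => i's; apply/implyP => sk'.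
by move: (H s); rewrite (leq_trans ii' i's) (leq_trans sk' k'k).
Qed.

(* As J-regions are intervals, this puts i, j, k in three different J-regions. *)
Definition separated i j k :=
  [&& i < j, j < k, ~~ same_regionb i j & ~~ same_regionb j k].

Lemma separated_widen i i' j k k' :
  i <= i' -> k' <= k -> separated i' j k' -> separated i j k.
Proof.
move=> ii' k'k /and4P [i'j jk' ni'j njk']; apply/and4P; split.
- exact: leq_ltn_trans ii' i'j.
- exact: leq_trans jk' k'k.
- by apply: contra ni'j; apply: same_regionb_sub.
- by apply: contra njk'; apply: same_regionb_sub.
Qed.

Lemma has_J231E w : has_J231 J w <->
  exists i j k, [/\ separated i j k, w i < w j & val (w i) = (w k).+1].
Proof.
split=> [[i [j [k [/andP [ij jk] [nij njk _] /andP [_ wij] wik]]]]|].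
  exists i, j, k; split=> //; rewrite /separated ij jk /=.
  by apply/andP; split; apply/negP => /same_regionP; [apply: nij | apply: njk].
case=> i [j [k [/[dup] sep /and4P [ij jk nij njk] wij wik]]].
exists i, j, k; split=> //; first by rewrite ij jk.
  split=> /same_regionP sr; [exact: negP nij sr | exact: negP njk sr |].
  exact: negP nij (same_regionb_sub (leqnn i) (ltnW jk) sr).
by rewrite wij andbT wik.
Qed.

Definition key_inv w : rel 'I_n :=
  fun i k => inv_rel w i k && [forall j, separated i j k ==> (w j < w i)].

Lemma key_invP w i k : reflect
  (inv_rel w i k /\ forall j, separated i j k -> w j < w i) (key_inv w i k).
Proof.
apply: (iffP andP) => [[wik /forallP H]|[wik H]]; split=> //.
  by move=> j; apply/implyP.
by apply/forallP => j; apply/implyP/H.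
Qed.

Lemma key_inv_oriented w : oriented (key_inv w).
Proof. by move=> i k /andP [/andP []]. Qed.

Lemma key_inv_sub w : subrel (key_inv w) (inv_rel w).
Proof. by move=> i k /andP []. Qed.

Lemma key_inv_shrink w i k l :
  key_inv w i k -> inv_rel w i l -> l <= k -> key_inv w i l.
Proof.
move=> /key_invP [_ H] wil lk; apply/key_invP; split=> // j sep.
exact/H/(separated_widen (leqnn i) lk sep).
Qed.

Lemma key_inv_cotrans w : cotransitive (key_inv w).
Proof.
move=> i j k ij jk /[dup] Kik /key_invP [/andP [_ wki] H].
case Wij: (inv_rel w i j); first by rewrite (key_inv_shrink Kik Wij (ltnW jk)).
have wij : w i < w j by rewrite perm_ltNinv // Wij.
apply/orP; right; apply/key_invP; split=> [|j' sep].
  by rewrite /inv_rel jk (ltn_trans wki wij).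
exact: ltn_trans (H j' (separated_widen (ltnW ij) (leqnn k) sep)) wij.
Qed.

Definition pi_down w : 'S_n := perm_of_inv (tclosure (key_inv w)).

Lemma inv_pi_down w : inv_rel (pi_down w) =2 tclosure (key_inv w).
Proof.
apply: inv_perm_of_inv; [exact: tclosure_oriented | exact: tclosure_trans |].
by apply: tclosure_cotrans; [exact: key_inv_oriented | exact: key_inv_cotrans].
Qed.

Lemma key_inv_pi_down w : subrel (key_inv w) (inv_rel (pi_down w)).
Proof.
by move=> i k Kik; rewrite inv_pi_down; apply: (sub_tclosure (@key_inv_oriented w)).
Qed.

Lemma pi_down_le w : weak_le (pi_down w) w.
Proof.
apply/weak_leP => i k; rewrite inv_pi_down.
exact: tclosure_min (@inv_rel_trans _ w) (@key_inv_sub w) i k.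
Qed.

Lemma pi_down_avoid w : ~ has_J231 J (pi_down w).
Proof.
case/has_J231E => i [j [k [sep dij dik]]]; have /and4P [ij jk _ _] := sep.
have /(tclosure_split (@key_inv_oriented w)) : tclosure (key_inv w) i k.
  by rewrite -inv_pi_down /inv_rel (ltn_trans ij jk) dik ltnSn.
case=> [Kik|[l Kil Klk]].
  have /key_invP [_ H] := Kik.
  have Kij : key_inv w i j.
    by apply: key_inv_shrink Kik _ (ltnW jk); rewrite /inv_rel ij H.
  by case/andP: (key_inv_pi_down Kij) => _; rewrite ltnNge (ltnW dij).
move: Kil Klk; rewrite -!inv_pi_down => /andP [_ dli] /andP [_ dkl].
by move: dli dkl; rewrite dik; lia.
Qed.

(* By induction on v: were the value v at a position left of i, it would form a
   (J,231)-pattern with j and the position of v - 1. *)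
Lemma J231_free_values_right a i j k :
  ~ has_J231 J a -> separated i j k -> a i < a j ->
  ~~ [exists l : 'I_n, (i < l < k) && (a k < a l < a i)] ->
  forall v : 'I_n, a k <= v < a i -> k <= (a^-1)%g v.
Proof.
move=> nJ sep aij nl v /andP [kv vi].
have [m vm] : exists m, v = a k + m :> nat by exists (v - a k); rewrite subnKC.
elim: m v vi {kv} vm => [|m IHm] v vi vm.
  have -> : v = a k by apply: val_inj => /=; rewrite vm addn0.
  by rewrite permK.
have v'n : a k + m < n by have := ltn_ord v; lia.
have kq : k <= (a^-1)%g (Ordinal v'n) by apply: IHm => //=; rewrite -addnS -vm ltnW.
have ap : a ((a^-1)%g v) = v by rewrite permKV.
set p := (a^-1)%g v in ap *.
have [pi|ip|/val_inj ep] := ltngtP p i; last by move: vi; rewrite -ap ep ltnn.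
  case: nJ; apply/has_J231E; exists p, j, ((a^-1)%g (Ordinal v'n)); split.
  - exact: separated_widen (ltnW pi) kq sep.
  - by rewrite ap (ltn_trans vi aij).
  - by rewrite /= ap permKV vm addnS.
have [pk|/ltnW //|/val_inj pk] := ltngtP p k; last by move: vm; rewrite -ap pk; lia.
case/negP: nl; apply/existsP; exists p; rewrite ip pk ap vi andbT /=; lia.
Qed.

Lemma J231_free_between a i j k :
  ~ has_J231 J a -> separated i j k -> a k < a i < a j ->
  exists2 l : 'I_n, i < l < k & a k < a l < a i.
Proof.
move=> nJ sep /andP [aki aij].
have [/existsP [l /andP [ilk akli]]|nl] :=
  boolP [exists l : 'I_n, (i < l < k) && (a k < a l < a i)]; first by exists l.
have vn : (a i).-1 < n by have := ltn_ord (a i); lia.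
have kq := J231_free_values_right nJ sep aij nl (v := Ordinal vn).
have /kq {}kq : a k <= (a i).-1 < a i by apply/andP; split; lia.
case: nJ; apply/has_J231E; exists i, j, ((a^-1)%g (Ordinal vn)); split=> //.
  exact: separated_widen (leqnn i) kq sep.
by rewrite permKV /=; lia.
Qed.

Lemma pi_down_max a w : ~ has_J231 J a -> weak_le a w -> weak_le a (pi_down w).
Proof.
move=> nJ /weak_leP aw; apply/weak_leP => i k; rewrite inv_pi_down.
apply: (tclosure_split_ind (@inv_rel_oriented _ a)) => {}i {}k aik.
have [Kik|nKik] := boolP (key_inv w i k); [by left | right].
have [j sep wij] : exists2 j, separated i j k & w i < w j.
  move: nKik; rewrite /key_inv aw //= negb_forall => /existsP [j].
  rewrite negb_imply => /andP [/[dup] sep /and4P [ij _ _ _] wji].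
  by exists j; rewrite // perm_ltNinv // /inv_rel ij.
have /and4P [ij jk _ _] := sep; have /andP [_ aki] := aik.
have aij : a i < a j.
  by rewrite perm_ltNinv //; apply: contra (aw i j) _; rewrite -perm_ltNinv.
have [l /andP [il lk] /andP [akl ali]] : exists2 l : 'I_n, i < l < k & a k < a l < a i.
  by apply: J231_free_between nJ sep _; rewrite aki aij.
by exists l; rewrite /inv_rel ?il ?lk ?akl ?ali.
Qed.

Lemma key_inv_of_le r v i k : weak_le r v -> inv_rel r i k ->
  (forall j, separated i j k -> ~~ (v k < v j)) -> key_inv r i k.
Proof.
move=> /weak_leP rv rik vk; apply/key_invP; split=> // j sep.
have /and4P [ij jk _ _] := sep; have /andP [_ rki] := rik.
apply: contraNT (vk j sep) => rji.
have rij : r i < r j by rewrite perm_ltNinv // /inv_rel ij.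
by case/andP: (rv j k (introT andP (conj jk (ltn_trans rki rij)))).
Qed.

Lemma key_inv_split_max v i j k : key_inv v i k -> separated i j k -> v k < v j ->
  (forall j', separated i j' k -> v k < v j' -> v j' <= v j) -> key_inv v j k.
Proof.
move=> /key_invP [_ H] sep vkj jmax; have /and4P [ij jk _ _] := sep.
apply/key_invP; split=> [|j' sep']; first by rewrite /inv_rel jk.
have /and4P [jj' _ _ _] := sep'.
have sep_i := separated_widen (ltnW ij) (leqnn k) sep'.
case: (ltnP (v k) (v j')) => [vkj'|vj'k]; last exact: leq_ltn_trans vj'k vkj.
rewrite ltn_neqAle jmax // andbT (inj_eq val_inj) (inj_eq perm_inj).
by rewrite -val_eqE gtn_eqF.
Qed.

(* A key inversion (i, k) of v = p \/ q splits into two key inversions of v: at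
   the separated position of largest value above v_k if there is one, otherwise
   at any intermediate point of a chain of inversions of p and q from i to k.  If
   that chain has a single step, (i, k) is a key inversion of p or q. *)
Lemma key_inv_join p q :
  subrel (key_inv (weak_join p q)) (tclosure (relU (key_inv p) (key_inv q))).
Proof.
set v := weak_join p q.
apply: (tclosure_split_ind (@key_inv_oriented v)) => i k Kik.
have /key_invP [vik H] := Kik.
have [/existsP [j0 Pj0]|] := boolP [exists j, separated i j k && (v k < v j)].
  case: (@arg_maxnP _ j0 (fun j => separated i j k && (v k < v j)) (fun j => v j) Pj0)
    => j /andP [sep vkj] jmax.
  have /and4P [ij jk _ _] := sep.
  right; exists j.
    by apply: key_inv_shrink Kik _ (ltnW jk); rewrite /inv_rel ij H.
  by apply: key_inv_split_max Kik sep vkj _ => j' ? ?; apply: jmax; apply/andP.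
rewrite negb_exists => /forallP vk.
have {}vk j : separated i j k -> ~~ (v k < v j).
  by move=> sep; move: (vk j); rewrite sep.
move: vik; rewrite inv_weak_join.
case/(tclosure_split (@inv_relU_oriented _ p q)) => [/orP [pik|qik]|[l vil vlk]].
- by left; rewrite /= (key_inv_of_le (@weak_join_ubl _ p q) pik vk).
- by left; rewrite /= (key_inv_of_le (@weak_join_ubr _ p q) qik vk) orbT.
- rewrite -!inv_weak_join -/v in vil vlk; have /andP [il _] := vil.
  have /andP [lk vkl] := vlk.
  right; exists l; first exact: key_inv_shrink Kik vil (ltnW lk).
  apply/key_invP; split=> // j' sep'.
  have := vk j' (separated_widen (ltnW il) (leqnn k) sep').
  by rewrite -leqNgt => /leq_ltn_trans; apply.
Qed.

Lemma pi_down_join x z : weak_le (pi_down (weak_join x z)) (weak_join (pi_down x) z).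
Proof.
have /weak_leP ubl := @weak_join_ubl _ (pi_down x) z.
have /weak_leP ubr := @weak_join_ubr _ (pi_down x) z.
apply/weak_leP => i k; rewrite inv_pi_down.
apply: tclosure_min (@inv_rel_trans _ _) _ i k => i k /key_inv_join.
apply: tclosure_min (@inv_rel_trans _ _) _ i k => i k /= /orP [].
  by move/key_inv_pi_down/ubl.
by move/key_inv_sub/ubr.
Qed.

Lemma pi_down_projection : down_projection (in_quotient J) (avoid_J231 J)
  (@weak_meet n) (@weak_join n) pi_down.
Proof.
split.
- move=> x y Px _; split; first exact: in_quotient_le Px (@weak_meet_lbl _ x y).
  + exact: weak_meet_lbl.
  + exact: weak_meet_lbr.
  + by move=> z _; apply: weak_meet_glb.
- move=> x y Px Py; split; first exact: in_quotient_join.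
  + exact: weak_join_ubl.
  + exact: weak_join_ubr.
  + by move=> z _; apply: weak_join_lub.
- by move=> a [].
- move=> x Px; split; last exact: pi_down_avoid.
  exact: in_quotient_le Px (@pi_down_le x).
- by move=> x _; apply: pi_down_le.
- by move=> a x [_ nJ] _; apply: pi_down_max.
- by move=> x z _ _; apply: pi_down_join.
Qed.

End ParabolicQuotient.

Theorem theorem1p1 (n : nat) (J : {set 'I_n.-1}) :
  0 < n ->
  is_lattice (avoid_J231 J) /\
  exists Th : 'S_n -> 'S_n -> Prop,
    lattice_congruence (in_quotient J) Th /\
    quotient_iso (in_quotient J) Th (avoid_J231 J).
Proof.
move=> _; have dp := pi_down_projection J.
split; first exact: proj_lattice dp.
exists (fun x y => pi_down J x = pi_down J y).
by split; [exact: proj_congruence dp | exact: proj_quotient_iso dp].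
Qed.
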